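(* Setting: $n$ agents on a connected, undirected weighted graph $\mathcal G$ with symmetric adjacency weights $a_{i,j}$ and Laplacian $L_n$; $L=L_n\otimes I_m$. For each $i$, $\Omega_i\subset\mathbb R^{q_i}$ is closed and convex, $f^i$ is strictly convex on an open set containing $\Omega_i$, $W_i\in\mathbb R^{m\times q_i}$, $d_i\in\mathbb R^m$, $\sum_i d_i=d_0$; $\Omega=\prod_i\Omega_i$, $f(x)=\sum_if^i(x_i)$, $W=[W_1,\dots,W_n]$, $\overline W=\mathrm{diag}\{W_1,\dots,W_n\}$, $d=[d_1^{\rm T},\dots,d_n^{\rm T}]^{\rm T}$; Slater's condition holds (some $x$ in the interior of $\Omega$ has $Wx=d_0$). Let $\mathcal F$ be the set-valued map $$\mathcal F(y,\lambda,z)=\Big\{\big(-y+x-g+\overline W^{\rm T}\lambda,\ d-\overline Wx-L\lambda-Lz,\ L\lambda\big):\ g\in\partial f(x),\ x=P_\Omega(y)\Big\}.$$ Let $x^*$ be the solution of $\min f(x)$ s.t. $Wx=d_0$, $x\in\Omega$, and let $(y^*,\lambda^*,z^* )$ be an equilibrium of $\dot\xi\in\mathcal F(\xi)$ (i.e. $0\in\mathcal F(y^*,\lambda^*,z^* )$) with $x^*=P_\Omega(y^* )$. Define $$V(y,\lambda,z)=\tfrac12\big(\|y-P_\Omega(y^* )\|^2-\|y-P_\Omega(y)\|^2\big)+\tfrac12\|\lambda-\lambda^*\|^2+\tfrac12\|z-z^*\|^2.$$ If $a\in\mathcal L_{\mathcal F}V(y,\lambda,z)$, then there exist $g(x)\in\partial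 f(x)$ and $g(x^* )\in\partial f(x^* )$, with $x=P_\Omega(y)$, such that $$a\le -(x-x^* )^{\rm T}(g(x)-g(x^* ))-\lambda^{\rm T}L\lambda\le 0.$$
   Context: $\partial f$ is the convex subdifferential; $P_\Omega$ the Euclidean projection onto $\Omega$. For a locally Lipschitz $V$ with Clarke generalized gradient $\partial V$, the set-valued Lie derivative is $\mathcal L_{\mathcal F}V(\xi)=\{a\in\mathbb R:\ \exists v\in\mathcal F(\xi)\text{ with } p^{\rm T}v=a\ \forall p\in\partial V(\xi)\}$. *)

From HB Require Import structures.
From mathcomp Require Import all_boot all_order all_algebra.
From mathcomp Require Import all_classical all_reals all_analysis.
Set Implicit Arguments. Unset Strict Implicit. Unset Printing Implicit Defensive.
Import Order.TTheory GRing.Theory Num.Theory.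
Import numFieldNormedType.Exports.
Local Open Scope classical_set_scope.
Local Open Scope ring_scope.

Definition cdot {R : realType} {k : nat} (u v : 'cV[R]_k) : R :=
  \sum_(l < k) u l 0 * v l 0.

Definition vecX (R : realType) (n : nat) (q : 'I_n -> nat) :=
  forall i : 'I_n, 'cV[R]_(q i).
Definition vecL (R : realType) (n m : nat) := 'I_n -> 'cV[R]_m.

Definition dotX {R : realType} {n} {q : 'I_n -> nat} (x y : vecX R q) : R :=
  \sum_(i < n) cdot (x i) (y i).
Definition dotL {R : realType} {n m} (x y : vecL R n m) : R :=
  \sum_(i < n) cdot (x i) (y i).

Definition subX {R : realType} {n} {q : 'I_n -> nat} (x y : vecX R q) : vecX R q :=
  fun i => x i - y i.
Definition subL {R : realType} {n m} (x y : vecL R n m) : vecL R n m :=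
  fun i => x i - y i.

Definition laplacian {R : realType} {n} (a : 'M[R]_n) : 'M[R]_n :=
  \matrix_(i, j) ((i == j)%:R * (\sum_(k < n) a i k) - a i j).

(* (L_n (x) I_m) lambda *)
Definition lapL {R : realType} {n m} (Ln : 'M[R]_n) (lam : vecL R n m) : vecL R n m :=
  fun i => \sum_(j < n) Ln i j *: lam j.

Definition convex_set' {R : realType} {k} (S : set 'cV[R]_k) : Prop :=
  forall x y, S x -> S y -> forall t : R, 0 <= t <= 1 ->
    S (t *: x + (1 - t) *: y).
Definition strictly_convex_on {R : realType} {k} (S : set 'cV[R]_k)
    (f : 'cV[R]_k -> R) : Prop :=
  forall x y, S x -> S y -> x != y -> forall t : R, 0 < t < 1 ->
    f (t *: x + (1 - t) *: y) < t * f x + (1 - t) * f y.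

Definition is_proj {R : realType} {k} (S : set 'cV[R]_k) (y x : 'cV[R]_k) : Prop :=
  S x /\ forall z, S z -> cdot (y - x) (y - x) <= cdot (y - z) (y - z).
Definition proj {R : realType} {k} (S : set 'cV[R]_k) (y : 'cV[R]_k) : 'cV[R]_k :=
  xget 0 [set x | is_proj S y x].
Definition projX {R : realType} {n} {q : 'I_n -> nat}
    (Om : forall i, set 'cV[R]_(q i)) (y : vecX R q) : vecX R q :=
  fun i => proj (Om i) (y i).

Definition fsum {R : realType} {n} {q : 'I_n -> nat}
    (f : forall i, 'cV[R]_(q i) -> R) (x : vecX R q) : R :=
  \sum_(i < n) f i (x i).

Definition subdiffX {R : realType} {n} {q : 'I_n -> nat}
    (U : forall i, set 'cV[R]_(q i)) (f : forall i, 'cV[R]_(q i) -> R)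
    (x g : vecX R q) : Prop :=
  forall z : vecX R q, (forall i, U i (z i)) ->
    fsum f x + dotX g (subX z x) <= fsum f z.

Definition WX {R : realType} {n m} {q : 'I_n -> nat}
    (W : forall i, 'M[R]_(m, q i)) (x : vecX R q) : 'cV[R]_m :=
  \sum_(i < n) W i *m x i.

Definition state (R : realType) (n m : nat) (q : 'I_n -> nat) :=
  (vecX R q * vecL R n m * vecL R n m)%type.

Definition sdot {R : realType} {n m} {q : 'I_n -> nat} (p v : state R m q) : R :=
  dotX p.1.1 v.1.1 + dotL p.1.2 v.1.2 + dotL p.2 v.2.
Definition sadd {R : realType} {n m} {q : 'I_n -> nat} (p v : state R m q) : state R m q :=
  (fun i => p.1.1 i + v.1.1 i, fun i => p.1.2 i + v.1.2 i, fun i => p.2 i + v.2 i).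
Definition sscale {R : realType} {n m} {q : 'I_n -> nat} (t : R) (v : state R m q) : state R m q :=
  (fun i => t *: v.1.1 i, fun i => t *: v.1.2 i, fun i => t *: v.2 i).
Definition ssub {R : realType} {n m} {q : 'I_n -> nat} (p v : state R m q) : state R m q :=
  (subX p.1.1 v.1.1, subL p.1.2 v.1.2, subL p.2 v.2).
Definition snorm {R : realType} {n m} {q : 'I_n -> nat} (p : state R m q) : R :=
  Num.sqrt (sdot p p).
Definition szero {R : realType} {n m} {q : 'I_n -> nat} : state R m q :=
  (fun i => 0, fun i => 0, fun i => 0).

Definition Fmap {R : realType} {n m} {q : 'I_n -> nat}
    (Ln : 'M[R]_n) (Om U : forall i, set 'cV[R]_(q i))
    (f : forall i, 'cV[R]_(q i) -> R) (W : forall i, 'M[R]_(m, q i))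
    (d : vecL R n m) (xi : state R m q) : set (state R m q) :=
  let y := xi.1.1 in let lam := xi.1.2 in let z := xi.2 in
  let x := projX Om y in
  [set v | exists g : vecX R q, subdiffX U f x g /\
     v = ((fun i => - y i + x i - g i + (W i)^T *m lam i),
          (fun i => d i - W i *m x i - lapL Ln lam i - lapL Ln z i),
          lapL Ln lam)].

(* Clarke generalized gradient, via Clarke's generalized directional
   derivative V°(xi; v) = limsup_{xi' -> xi, t -> 0+} (V(xi' + t v) - V(xi'))/t:
   p in dV(xi) iff p.v <= V°(xi; v) for all v (limsup unfolded). *)
Definition clarke_grad {R : realType} {n m} {q : 'I_n -> nat}
    (V : state R m q -> R) (xi : state R m q) : set (state R m q) :=
  [set p | forall v : state R m q, forall eps : R, 0 < eps -> forall del : R, 0 < del ->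
     exists xi' : state R m q, exists t : R,
       snorm (ssub xi' xi) < del /\ 0 < t < del /\
       sdot p v - eps < (V (sadd xi' (sscale t v)) - V xi') / t].

Definition lie_deriv {R : realType} {n m} {q : 'I_n -> nat}
    (F : state R m q -> set (state R m q)) (V : state R m q -> R)
    (xi : state R m q) : set R :=
  [set a | exists2 v, F xi v & forall p, clarke_grad V xi p -> sdot p v = a].

Definition Vfun {R : realType} {n m} {q : 'I_n -> nat}
    (Om : forall i, set 'cV[R]_(q i)) (ystar : vecX R q) (lamstar zstar : vecL R n m)
    (xi : state R m q) : R :=
  let y := xi.1.1 in let lam := xi.1.2 in let z := xi.2 in
  2^-1 * (dotX (subX y (projX Om ystar)) (subX y (projX Om ystar))
          - dotX (subX y (projX Om y)) (subX y (projX Om y)))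
  + 2^-1 * dotL (subL lam lamstar) (subL lam lamstar)
  + 2^-1 * dotL (subL z zstar) (subL z zstar).

From Pilot Require Import Defs.
From HB Require Import structures.
From mathcomp Require Import all_boot all_order all_algebra.
From mathcomp Require Import all_classical all_reals all_analysis.
From mathcomp Require Import ring lra.
Import Order.TTheory GRing.Theory Num.Theory.
Import numFieldNormedType.Exports.
Local Open Scope classical_set_scope.
Local Open Scope ring_scope.

(* Half the squared distance to Omega is differentiable with gradient
   y - P(y), so V is differentiable with gradient p given by P(y) - x* in y,
   lambda - lambda* in lambda and z - z* in z; V even lies above its
   linearization, which puts p in the Clarke gradient, so a = <p, v> for some
   v in F.  Subtracting the equilibrium equations from <p, v> leaves two
   projection terms, nonpositive by the variational inequality of P_Omega, the
   term -<x - x*, g - g*>, nonpositive by monotonicity of the subdifferential,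
   and -<lambda, L lambda>, nonpositive since the Laplacian quadratic form is
   a weighted sum of the squares |lambda_i - lambda_j|^2. *)

Ltac merge_sums :=
  rewrite ?opprD ?opprK ?mulrDr ?mulrN ?mulr_sumr -?sumrN -?big_split -?sumrB ?subr0 /=.

(* Reduces an identity between inner products of linear combinations of
   vectors to a coordinatewise ring identity. *)
Ltac cdot_ring :=
  rewrite /cdot; apply/eqP; rewrite -subr_eq0; apply/eqP; merge_sums;
  apply: big1 => l _; rewrite !mxE; ring.

Section inner_product.
Context {R : realType} {k : nat}.
Implicit Types (u v w : 'cV[R]_k).

Lemma cdot_ge0 u : 0 <= cdot u u.
Proof. by apply: sumr_ge0 => l _; rewrite -expr2 sqr_ge0. Qed.

Lemma cdotC u v : cdot u v = cdot v u.
Proof. by apply: eq_bigr => l _; rewrite mulrC. Qed.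

Lemma cdot0r u : cdot u 0 = 0.
Proof. by rewrite /cdot big1 // => l _; rewrite mxE mulr0. Qed.

Lemma cdotZr u v (c : R) : cdot u (c *: v) = c * cdot u v.
Proof. by rewrite /cdot mulr_sumr; apply: eq_bigr => l _; rewrite mxE mulrCA. Qed.

Lemma cdot_sumr (I : finType) u (F : I -> 'cV[R]_k) :
  cdot u (\sum_j F j) = \sum_j cdot u (F j).
Proof.
by rewrite /cdot exchange_big; apply: eq_bigr => l _; rewrite summxE mulr_sumr.
Qed.

Lemma cdot_trmx_mulmx p (A : 'M[R]_(p, k)) u (v : 'cV[R]_p) :
  cdot u (A^T *m v) = cdot (A *m u) v.
Proof.
rewrite /cdot; under eq_bigr do rewrite mxE mulr_sumr.
under [RHS]eq_bigr do rewrite mxE mulr_suml.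
rewrite exchange_big; apply: eq_bigr => j _; apply: eq_bigr => l _.
by rewrite mxE mulrCA mulrA.
Qed.

Lemma sqr_coord_le_cdot u l : u l 0 ^+ 2 <= cdot u u.
Proof.
rewrite /cdot (bigD1 l) //= -expr2 lerDl.
by apply: sumr_ge0 => i _; rewrite -expr2 sqr_ge0.
Qed.

Lemma cdot_sqr_shift (a b w : 'cV[R]_k) (t : R) :
  cdot (a + t *: w - b) (a + t *: w - b) =
  cdot (a - b) (a - b) + 2 * t * cdot (a - b) w + t ^+ 2 * cdot w w.
Proof. cdot_ring. Qed.

Lemma half_sqdist_ray_ge (a b w : 'cV[R]_k) (t : R) :
  t * cdot (a - b) w <=
  2^-1 * cdot (a + t *: w - b) (a + t *: w - b) - 2^-1 * cdot (a - b) (a - b).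
Proof. by rewrite cdot_sqr_shift; have := mulr_ge0 (sqr_ge0 t) (cdot_ge0 w); lra. Qed.

Lemma sqdist_continuous y : continuous (fun v : 'cV[R]_k => cdot (y - v) (y - v)).
Proof.
apply: continuous_big; first exact: add_continuous.
move=> l _ v.
have coord_cont : continuous (fun v : 'cV[R]_k => (y - v) l 0).
  have -> : (fun v : 'cV[R]_k => (y - v) l 0) = (fun v => y l 0 - v l 0).
    by apply/funext => w; rewrite !mxE.
  by move=> w; apply: continuousB; [exact: cst_continuous | exact: coord_continuous].
exact: (@continuousM R _ _ _ v (coord_cont v) (coord_cont v)).
Qed.

Lemma sqdist_le_coord_bound y v r i :
  cdot (y - v) (y - v) <= r -> `|v i 0| <= `|y i 0| + 1 + r.
Proof.
move=> yv_r; set t := (y - v) i 0.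
have t2_r : t ^+ 2 <= r by apply: le_trans yv_r; exact: sqr_coord_le_cdot.
have t_le : `|t| <= 1 + t ^+ 2.
  by have [t0|t0] := leP 0 t; [rewrite ger0_norm // | rewrite ltr0_norm //]; nra.
have -> : v i 0 = y i 0 - t by rewrite /t !mxE opprB addrC subrK.
by apply: le_trans (ler_normB _ _) _; rewrite -addrA lerD2l; lra.
Qed.

End inner_product.

Lemma trmx_continuous (K : numFieldType) p r : continuous (@trmx K p r).
Proof.
move=> M s /= /(nbhs_ballP (M^T)) [e e0 es].
by apply/nbhs_ballP; exists e => //= N [_ MN]; apply: es; split => // i j; rewrite !mxE.
Qed.

Section projection.
Context {R : realType} {k : nat} {S : set 'cV[R]_k}.

(* The distance to [y] attains its minimum on the compact set of points of
   [S] at least as close to [y] as [s0]. *)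
Lemma is_proj_exists y {s0 : 'cV[R]_k} : closed S -> S s0 -> exists x, is_proj S y x.
Proof.
move=> S_closed Ss0.
pose F v := cdot (y - v) (y - v).
pose A := S `&` [set v | F v <= F s0].
pose c i := `|y i 0| + 1 + F s0.
pose box := [set v : 'rV[R]_k | forall i, `[- c i, c i]%classic (v ord0 i)].
have box_compact : compact (trmx @` box).
  apply: (continuous_compact (continuous_subspaceT (@trmx_continuous R 1 k))).
  exact: (rV_compact (fun i => @segment_compact R (- c i) (c i))).
have A_compact : compact A.
  apply: subclosed_compact _ box_compact _.
    apply: closedI => //; apply: closed_comp (@closed_le _ _) => v _.
    exact: sqdist_continuous.
  move=> v [_ Fv]; exists v^T; last by rewrite trmxK.
  by move=> i; rewrite /= in_itv /= -ler_norml mxE; exact: sqdist_le_coord_bound.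
have A_s0 : A !=set0 by exists s0; split => /=.
have [x /set_mem [Sx _] x_min] :=
  compact_EVT_min A_s0 A_compact (continuous_subspaceT (sqdist_continuous y)).
exists x; split => // z Sz.
have [Fz|Fz] := leP (F z) (F s0); first by apply: x_min; rewrite inE.
by apply: (le_trans _ (ltW Fz)); apply: x_min; rewrite inE; split => /=.
Qed.

Lemma is_proj_proj y {s0 : 'cV[R]_k} : closed S -> S s0 -> is_proj S y (Defs.proj S y).
Proof. by move=> S_closed Ss0; apply: xgetPex; have := is_proj_exists y S_closed Ss0. Qed.

(* Minimality of [x] on the segment from [x] to [w] gives
   [2 t c <= t^2 |w - x|^2] for [t] in [0, 1]; take [t = c / (|w - x|^2 + c)]. *)
Lemma is_proj_variational {y x w : 'cV[R]_k} :
  convex_set' S -> is_proj S y x -> S w -> cdot (y - x) (w - x) <= 0.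
Proof.
move=> S_convex [Sx x_min] Sw.
set c := cdot (y - x) (w - x); set K := cdot (w - x) (w - x).
have K_ge0 : 0 <= K by exact: cdot_ge0.
have segment_ineq t : 0 <= t <= 1 -> 2 * t * c <= t ^+ 2 * K.
  move=> t01; have := x_min _ (S_convex _ _ Sw Sx t t01).
  have -> : cdot (y - (t *: w + (1 - t) *: x)) (y - (t *: w + (1 - t) *: x))
     = cdot (y - x) (y - x) - 2 * t * c + t ^+ 2 * K by rewrite /c /K; cdot_ring.
  lra.
rewrite leNgt; apply/negP => c_gt0.
have Kc_gt0 : 0 < K + c by lra.
set t := c / (K + c).
have tKc : t * (K + c) = c by rewrite /t mulrVK // unitfE gt_eqF.
have t_ge0 : 0 <= t by rewrite /t divr_ge0 // ltW.
have t_le1 : t <= 1 by rewrite /t ler_pdivrMr // mul1r; lra.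
by have := segment_ineq t; rewrite t_ge0 t_le1 => /(_ isT); nra.
Qed.

(* [y |-> (|y - b|^2 - |y - P y|^2) / 2] lies above its linearization with
   slope [P y - b]. *)
Lemma sqdist_gap_ray_ge {y x x' w : 'cV[R]_k} {t : R} b :
  is_proj S y x -> is_proj S (y + t *: w) x' ->
  t * cdot (x - b) w <=
  2^-1 * (cdot (y + t *: w - b) (y + t *: w - b)
          - cdot (y + t *: w - x') (y + t *: w - x'))
  - 2^-1 * (cdot (y - b) (y - b) - cdot (y - x) (y - x)).
Proof.
move=> [Sx _] [_ x'_min]; have := x'_min x Sx.
have shift_b := cdot_sqr_shift y b w t; have shift_x := cdot_sqr_shift y x w t.
have -> : cdot (x - b) w = cdot (y - b) w - cdot (y - x) w by cdot_ring.
lra.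
Qed.

End projection.

Section clarke.
Context {R : realType} {n m : nat} {q : 'I_n -> nat}.
Implicit Types (xi p v : state R m q) (V : state R m q -> R).

Lemma snorm_ssubxx xi : snorm (ssub xi xi) = 0.
Proof.
rewrite /snorm /sdot /ssub /dotX /dotL /= !big1 ?addr0 ?sqrtr0 // => i _;
by rewrite /subX /subL subrr cdot0r.
Qed.

(* Clarke's limsup dominates the difference quotients at [xi] itself. *)
Lemma clarke_grad_of_ray_ge V xi p :
  (forall v t, 0 < t -> V xi + t * sdot p v <= V (sadd xi (sscale t v))) ->
  clarke_grad V xi p.
Proof.
move=> ray_ge v eps eps_gt0 del del_gt0; exists xi, (del / 2).
have t_gt0 : 0 < del / 2 by rewrite divr_gt0.
rewrite snorm_ssubxx; split=> //; split; first by apply/andP; split; lra.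
rewrite ltr_pdivlMr //; have := ray_ge v _ t_gt0.
have := mulr_gt0 eps_gt0 t_gt0; lra.
Qed.

End clarke.

Section subdifferential.
Context {R : realType} {n : nat} {q : 'I_n -> nat}.
Context {U : forall i, set 'cV[R]_(q i)} {f : forall i, 'cV[R]_(q i) -> R}.

Lemma subdiffX_monotone {x x' g g' : vecX R q} :
  (forall i, U i (x i)) -> (forall i, U i (x' i)) ->
  subdiffX U f x g -> subdiffX U f x' g' -> 0 <= dotX (subX x x') (subX g g').
Proof.
move=> Ux Ux' g_sub g'_sub; have := g_sub x' Ux'; have := g'_sub x Ux.
have -> : dotX (subX x x') (subX g g') = - dotX g (subX x' x) - dotX g' (subX x x').
  by rewrite /dotX /subX; apply/eqP; rewrite -subr_eq0; apply/eqP; merge_sums;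
     apply: big1 => i _; cdot_ring.
lra.
Qed.

End subdifferential.

Section laplacian.
Context {R : realType} {n m : nat}.
Implicit Types (u v w : vecL R n m) (Ln : 'M[R]_n).

Lemma dotL_subl u v w : dotL (subL u v) w = dotL u w - dotL v w.
Proof. by rewrite /dotL -sumrB; apply: eq_bigr => i _; rewrite /subL; cdot_ring. Qed.

Lemma dotL_lapLE Ln u v :
  dotL u (lapL Ln v) = \sum_(i < n) \sum_(j < n) Ln i j * cdot (u i) (v j).
Proof.
apply: eq_bigr => i _; rewrite cdot_sumr.
by apply: eq_bigr => j _; rewrite cdotZr.
Qed.

Lemma dotL_lapLC Ln u v : (forall i j, Ln i j = Ln j i) ->
  dotL u (lapL Ln v) = dotL v (lapL Ln u).
Proof.
move=> Ln_sym; rewrite !dotL_lapLE exchange_big; apply: eq_bigr => i _.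
by apply: eq_bigr => j _; rewrite Ln_sym cdotC.
Qed.

Variable a : 'M[R]_n.
Hypothesis a_sym : forall i j, a i j = a j i.

Lemma laplacian_sym i j : laplacian a i j = laplacian a j i.
Proof. by rewrite !mxE eq_sym; case: eqP => [->|_]; rewrite ?mul0r ?sub0r 1?a_sym. Qed.

Lemma dotL_lapL_laplacian u :
  2 * dotL u (lapL (laplacian a) u) =
  \sum_(i < n) \sum_(j < n) a i j * cdot (u i - u j) (u i - u j).
Proof.
pose c i j := cdot (u i) (u j).
have row_sum i :
    \sum_(j < n) laplacian a i j * c i j = \sum_(j < n) a i j * (c i i - c i j).
  under eq_bigr do rewrite mxE mulrBl.
  rewrite sumrB [X in X - _](bigD1 i) //= eqxx mul1r [X in _ + X - _]big1 => [|j ji].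
    by rewrite addr0 mulr_suml -sumrB; apply: eq_bigr => j _; rewrite mulrBr.
  by rewrite eq_sym (negbTE ji) !mul0r.
have swap : \sum_(i < n) \sum_(j < n) a i j * (c i i - c i j) =
            \sum_(i < n) \sum_(j < n) a i j * (c j j - c i j).
  rewrite exchange_big; apply: eq_bigr => i _; apply: eq_bigr => j _.
  by rewrite a_sym /c cdotC.
rewrite dotL_lapLE (eq_bigr _ (fun i _ => row_sum i)) mulr2n mulrDl mul1r {2}swap.
rewrite -big_split; apply: eq_bigr => i _; rewrite -big_split; apply: eq_bigr => j _.
by rewrite /c; cdot_ring.
Qed.

Lemma dotL_lapL_laplacian_ge0 u : (forall i j, 0 <= a i j) ->
  0 <= dotL u (lapL (laplacian a) u).
Proof.
move=> a_ge0; rewrite -(pmulr_rge0 _ (ltr0n _ 2)) dotL_lapL_laplacian.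
by do 2 apply: sumr_ge0 => ? _; rewrite mulr_ge0 ?cdot_ge0.
Qed.

End laplacian.

Section lyapunov_function.
Context {R : realType} {n m : nat} {q : 'I_n -> nat}.
Variables (Om : forall i, set 'cV[R]_(q i)) (s0 : vecX R q).
Hypotheses (Om_closed : forall i, closed (Om i)) (Om_s0 : forall i, Om i (s0 i)).

Lemma is_proj_projX (y : vecX R q) i : is_proj (Om i) (y i) (projX Om y i).
Proof. by have := is_proj_proj (y i) (Om_closed i) (Om_s0 i). Qed.

Lemma dotL_half_sqdist_ray_ge (u us w : vecL R n m) (t : R) :
  t * dotL (subL u us) w <=
  2^-1 * dotL (subL (fun i => u i + t *: w i) us) (subL (fun i => u i + t *: w i) us)
  - 2^-1 * dotL (subL u us) (subL u us).
Proof.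
rewrite /dotL !mulr_sumr -sumrB; apply: ler_sum => i _.
exact: half_sqdist_ray_ge.
Qed.

Variables (ystar : vecX R q) (lamstar zstar : vecL R n m).

Definition Vfun_grad (xi : state R m q) : state R m q :=
  (subX (projX Om xi.1.1) (projX Om ystar), subL xi.1.2 lamstar, subL xi.2 zstar).

Lemma Vfun_ray_ge xi v t :
  Vfun Om ystar lamstar zstar xi + t * sdot (Vfun_grad xi) v <=
  Vfun Om ystar lamstar zstar (sadd xi (sscale t v)).
Proof.
case: xi => [[y lam] z]; set y' := fun i => y i + t *: v.1.1 i.
have y_part : t * dotX (subX (projX Om y) (projX Om ystar)) v.1.1 <=
    2^-1 * (dotX (subX y' (projX Om ystar)) (subX y' (projX Om ystar))
            - dotX (subX y' (projX Om y')) (subX y' (projX Om y')))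
    - 2^-1 * (dotX (subX y (projX Om ystar)) (subX y (projX Om ystar))
              - dotX (subX y (projX Om y)) (subX y (projX Om y))).
  rewrite /dotX -!sumrB !mulr_sumr -sumrB; apply: ler_sum => i _.
  exact: sqdist_gap_ray_ge (is_proj_projX y i) (is_proj_projX y' i).
have lam_part := dotL_half_sqdist_ray_ge lam lamstar v.1.2 t.
have z_part := dotL_half_sqdist_ray_ge z zstar v.2 t.
rewrite /Vfun /sdot /=; lra.
Qed.

End lyapunov_function.

Section flow.
Context {R : realType} {n m : nat} {q : 'I_n -> nat}.
Variables (Ln : 'M[R]_n) (W : forall i, 'M[R]_(m, q i)) (d : vecL R n m).
Hypothesis Ln_sym : forall i j, Ln i j = Ln j i.

Definition flow_field (y : vecX R q) (lam z : vecL R n m) (x g : vecX R q) :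
    state R m q :=
  ((fun i => - y i + x i - g i + (W i)^T *m lam i),
   (fun i => d i - W i *m x i - lapL Ln lam i - lapL Ln z i),
   lapL Ln lam).

Lemma sdot_flow_field ys lams zs xs gs :
  flow_field ys lams zs xs gs = szero -> forall y lam z x g,
  sdot (subX x xs, subL lam lams, subL z zs) (flow_field y lam z x g) =
  \sum_(i < n) (cdot (y i - x i) (xs i - x i) + cdot (ys i - xs i) (x i - xs i))
  - dotX (subX x xs) (subX g gs) - dotL lam (lapL Ln lam).
Proof.
move=> equilibrium y lam z x g.
have eq_y i : - ys i + xs i - gs i + (W i)^T *m lams i = 0.
  by have := congr1 (fun s : state R m q => s.1.1 i) equilibrium.
have eq_lam i : d i - W i *m xs i - lapL Ln lams i - lapL Ln zs i = 0.
  by have := congr1 (fun s : state R m q => s.1.2 i) equilibrium.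
have eq_z i : lapL Ln lams i = 0.
  by have := congr1 (fun s : state R m q => s.2 i) equilibrium.
have y_term i : cdot (x i - xs i) (- y i + x i - g i + (W i)^T *m lam i) =
    cdot (y i - x i) (xs i - x i) + cdot (ys i - xs i) (x i - xs i)
    - cdot (x i - xs i) (g i - gs i) + cdot (W i *m (x i - xs i)) (lam i - lams i).
  transitivity (cdot (x i - xs i) (- y i + x i - g i + (W i)^T *m lam i)
                - cdot (x i - xs i) (- ys i + xs i - gs i + (W i)^T *m lams i)).
    by rewrite eq_y cdot0r subr0.
  by rewrite -cdot_trmx_mulmx mulmxBr; cdot_ring.
have lam_term i :
    cdot (lam i - lams i) (d i - W i *m x i - lapL Ln lam i - lapL Ln z i) =
    - cdot (W i *m (x i - xs i)) (lam i - lams i)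
    - cdot (lam i - lams i) (lapL Ln lam i) - cdot (lam i - lams i) (lapL Ln z i)
    + cdot (lam i - lams i) (lapL Ln zs i).
  transitivity (cdot (lam i - lams i) (d i - W i *m x i - lapL Ln lam i - lapL Ln z i)
      - cdot (lam i - lams i) (d i - W i *m xs i - lapL Ln lams i - lapL Ln zs i)).
    by rewrite eq_lam cdot0r subr0.
  rewrite eq_z mulmxBr.
  by move: (lapL Ln lam i) (lapL Ln z i) (lapL Ln zs i) => L1 L2 L3; cdot_ring.
have lams_ker u : dotL u (lapL Ln lams) = 0.
  by rewrite /dotL big1 // => i _; rewrite eq_z cdot0r.
have lap_terms : dotL (subL lam lams) (lapL Ln lam) + dotL (subL lam lams) (lapL Ln z)
    - dotL (subL lam lams) (lapL Ln zs) - dotL (subL z zs) (lapL Ln lam) =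
    dotL lam (lapL Ln lam).
  rewrite !dotL_subl !(dotL_lapLC _ lams) // !lams_ker.
  by rewrite (dotL_lapLC _ lam z) // (dotL_lapLC _ lam zs) //; lra.
rewrite -lap_terms /sdot /= /dotX /dotL /subX /subL; apply/eqP; rewrite -subr_eq0.
by apply/eqP; merge_sums; apply: big1 => i _; rewrite y_term lam_term; ring.
Qed.

End flow.

Theorem lemma6 (R : realType) (n m : nat) (q : 'I_n -> nat)
  (a : 'M[R]_n)
  (Ha_sym : forall i j, a i j = a j i)
  (Ha_nn : forall i j, 0 <= a i j)
  (Hconn : forall i j : 'I_n, connect (fun k l => 0 < a k l) i j)
  (Om U : forall i : 'I_n, set 'cV[R]_(q i))
  (HOm_closed : forall i, closed (Om i))
  (HOm_conv : forall i, convex_set' (Om i))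
  (f : forall i : 'I_n, 'cV[R]_(q i) -> R)
  (HU_open : forall i, open (U i))
  (HU_conv : forall i, convex_set' (U i))
  (HOmU : forall i, Om i `<=` U i)
  (Hf_sc : forall i, strictly_convex_on (U i) (f i))
  (W : forall i : 'I_n, 'M[R]_(m, q i))
  (d : vecL R n m) (d0 : 'cV[R]_m)
  (Hd : \sum_(i < n) d i = d0)
  (Hslater : exists x : vecX R q,
     (forall i, interior (Om i) (x i)) /\ WX W x = d0)
  (xstar : vecX R q)
  (Hxstar_feas : (forall i, Om i (xstar i)) /\ WX W xstar = d0)
  (Hxstar_opt : forall x : vecX R q, (forall i, Om i (x i)) -> WX W x = d0 ->
     fsum f xstar <= fsum f x)
  (ystar : vecX R q) (lamstar zstar : vecL R n m)
  (Heq : Fmap (laplacian a) Om U f W d (ystar, lamstar, zstar) szero)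
  (Hxs : projX Om ystar = xstar)
  (y : vecX R q) (lam z : vecL R n m) (aa : R)
  (Ha : lie_deriv (Fmap (laplacian a) Om U f W d)
          (Vfun Om ystar lamstar zstar) (y, lam, z) aa) :
  exists g gstar : vecX R q,
    subdiffX U f (projX Om y) g /\ subdiffX U f xstar gstar /\
    aa <= - dotX (subX (projX Om y) xstar) (subX g gstar)
          - dotL lam (lapL (laplacian a) lam) /\
    - dotX (subX (projX Om y) xstar) (subX g gstar)
          - dotL lam (lapL (laplacian a) lam) <= 0.
Proof.
have Om_xstar i : Om i (xstar i) := Hxstar_feas.1 i.
have proj_y := is_proj_projX _ _ HOm_closed Om_xstar y.
have proj_ystar i : is_proj (Om i) (ystar i) (xstar i).
  by rewrite -Hxs; exact: is_proj_projX.
case: Heq => gstar [gstar_sub /esym equilibrium]; rewrite Hxs in gstar_sub equilibrium.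
case: Ha => _ [g [g_sub ->]] lie_eq; exists g, gstar; do 2 split => //.
have V_grad : clarke_grad (Vfun Om ystar lamstar zstar) (y, lam, z)
    (Vfun_grad Om ystar lamstar zstar (y, lam, z)).
  by apply: clarke_grad_of_ray_ge => v t _; exact: (Vfun_ray_ge _ _ HOm_closed Om_xstar).
have := lie_eq _ V_grad.
rewrite /Vfun_grad /= Hxs (sdot_flow_field _ _ _ (laplacian_sym a Ha_sym) _ _ _ _ _ equilibrium) => <-.
have projection_terms : \sum_(i < n) (cdot (y i - projX Om y i) (xstar i - projX Om y i)
    + cdot (ystar i - xstar i) (projX Om y i - xstar i)) <= 0.
  apply: sumr_le0 => i _.
  have := is_proj_variational (HOm_conv i) (proj_y i) (Om_xstar i).
  have := is_proj_variational (HOm_conv i) (proj_ystar i) (proj_y i).1.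
  lra.
have := subdiffX_monotone (fun i => HOmU i _ (proj_y i).1)
  (fun i => HOmU i _ (Om_xstar i)) g_sub gstar_sub.
have := dotL_lapL_laplacian_ge0 a Ha_sym lam Ha_nn.
split; lra.
Qed.
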